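(* Let $\mathcal{G}=(\mathcal{V},\mathcal{E})$ be a finite graph and let $$R(\mathcal{G})=\{x\in[0,1]^{\mathcal{V}}:\ \mathfrak{K}_{\mathcal{G}'}(x|_{\mathcal{G}'})>0\text{ for every induced subgraph }\mathcal{G}'\subseteq\mathcal{G}\}.$$ For a unit vector $u$ in the nonnegative orthant of $\mathbb{R}^{\mathcal{V}}$, let $$\rho(u)=\inf\{r\in[0,\infty):\ \min_{\mathcal{G}'\subseteq\mathcal{G}}\mathfrak{K}_{\mathcal{G}'}(ru|_{\mathcal{G}'})=0\},$$ the minimum over all induced subgraphs $\mathcal{G}'$. Then: (1) $\rho(u)=\min\{r\in[0,\infty):\mathfrak{K}_{\mathcal{G}}(ru)=0\}$ (in particular this minimum exists); (2) for $x\in[0,1]^{\mathcal{V}}\setminus\{0\}$, $x\in R(\mathcal{G})$ if and only if $|x|<\rho(x/|x|)$; (3) the map $u\mapsto\rho(u)$ is continuous on the set of unit vectors in the nonnegative orthant; (4) the map $\{y\in[0,1]^{\mathcal{V}}:|y|<1\}\to R(\mathcal{G})$, $y\mapsto\rho(y/|y|)\,y$ (interpreted as $0$ when $y=0$) is a homeomorphism.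
   Context: Graphs are finite, simple, undirected. A clique is a set of pairwise adjacent vertices (the empty set is a clique). An induced subgraph $\mathcal{G}'$ has vertex set $\mathcal{V}'\subseteq\mathcal{V}$ and all edges of $\mathcal{G}$ between vertices of $\mathcal{V}'$; $x|_{\mathcal{G}'}=(x_v)_{v\in\mathcal{V}'}$. $\mathfrak{K}_{\mathcal{G}}(x)=\sum_{\mathcal{K}\subseteq\mathcal{V}\text{ clique}}(-1)^{|\mathcal{K}|}\prod_{v\in\mathcal{K}}x_v$, the empty clique contributing $1$. $|\cdot|$ is the Euclidean norm. *)

From HB Require Import structures.
From mathcomp Require Import all_boot all_order all_algebra.
From mathcomp Require Import all_classical all_reals all_analysis.
Set Implicit Arguments.
Unset Strict Implicit.
Unset Printing Implicit Defensive.
Import Order.TTheory GRing.Theory Num.Theory.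
Import numFieldNormedType.Exports.
Local Open Scope classical_set_scope.
Local Open Scope ring_scope.

(* A finite simple graph on vertex set 'I_n is a symmetric irreflexive
   relation E : rel 'I_n.  Points of R^V are row vectors 'rV[R]_n. *)

Definition is_clique n (E : rel 'I_n) (K : {set 'I_n}) : bool :=
  [forall u in K, forall v in K, (u != v) ==> E u v].

(* Clique polynomial of the induced subgraph on S, evaluated at x|_S:
   sum over cliques K of G[S] (i.e. cliques K of G with K \subset S). *)
Definition cliquePoly (R : pzRingType) n (E : rel 'I_n) (S : {set 'I_n})
  (x : 'rV[R]_n) : R :=
  \sum_(K : {set 'I_n} | (K \subset S) && is_clique E K)
     (-1) ^+ #|K| * \prod_(v in K) x ord0 v.

Definition enorm (R : rcfType) n (x : 'rV[R]_n) : R :=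
  Num.sqrt (\sum_(i < n) x ord0 i ^+ 2).

Definition in_cube (R : realDomainType) n (x : 'rV[R]_n) : Prop :=
  forall i, 0 <= x ord0 i <= 1.

Definition unit_nonneg (R : rcfType) n : set 'rV[R]_n :=
  [set u : 'rV[R]_n | (forall i, 0 <= u ord0 i) /\ enorm u = 1].

Definition RG (R : realDomainType) n (E : rel 'I_n) : set 'rV[R]_n :=
  [set x : 'rV[R]_n | in_cube x /\ forall S : {set 'I_n}, 0 < cliquePoly E S x].

(* "min over induced subgraphs G' of K_{G'}(x|_{G'}) equals 0", written out:
   all values are >= 0 and one of them is 0. *)
Definition min_cliquePoly_eq0 (R : realDomainType) n (E : rel 'I_n)
  (x : 'rV[R]_n) : Prop :=
  (forall S : {set 'I_n}, 0 <= cliquePoly E S x) /\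
  (exists S : {set 'I_n}, cliquePoly E S x = 0).

Definition rho (R : realType) n (E : rel 'I_n) (u : 'rV[R]_n) : R :=
  inf [set r : R | 0 <= r /\ min_cliquePoly_eq0 E (r *: u)].

Definition open_ball_cube (R : rcfType) n : set 'rV[R]_n :=
  [set y : 'rV[R]_n | in_cube y /\ enorm y < 1].

Definition rho_map (R : realType) n (E : rel 'I_n) (y : 'rV[R]_n) : 'rV[R]_n :=
  if y == 0 then 0 else rho E ((enorm y)^-1 *: y) *: y.

From HB Require Import structures.
From mathcomp Require Import all_boot all_order all_algebra.
From mathcomp Require Import all_classical all_reals all_analysis.
From mathcomp Require Import lra.
Set Implicit Arguments.
Unset Strict Implicit.
Unset Printing Implicit Defensive.
Import Order.TTheory GRing.Theory Num.Theory.
Import numFieldNormedType.Exports.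
Local Open Scope ring_scope.

(* Deleting a vertex [w] of [S] gives the recurrence
   [K_S(x) = K_(S\w)(x) - x_w K_(N(w) & S)(x)], and an induction on [S] turns
   it into a monotonicity property: if all [K_S] are positive at [x >= 0], they
   stay positive at every [0 <= y <= x], and for [A \subset B] the ratio
   [K_A / K_B] increases with the point.  Hence along a ray [r u] the
   positivity region is an interval [0 <= r < r0], open by continuity of the
   [K_S]; at [r0] all [K_S] are nonnegative and one of them vanishes, so
   [r0 = rho(u)], and [K_G(r0 u) = 0] because [K_S] decreases in [S].
   Positivity slightly below [rho(u)] is an open condition in [u]; slightly
   above, a minimal vanishing [K_S] turns negative by the ratio property, which
   is open again: so [rho] is continuous.  The map [y |-> rho(y/|y|) y] and its
   inverse [x |-> x / rho(x/|x|)] are then continuous away from [0], and at [0]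
   because [rho] is bounded above and away from [0] on the unit sphere. *)

Lemma proper_ind (T : finType) (P : {set T} -> Prop) :
  (forall B : {set T}, (forall A : {set T}, A \proper B -> P A) -> P B) ->
  forall B, P B.
Proof.
move=> IH B; have [m] := ubnP #|B|; elim: m B => // m IHm B Bm.
by apply: IH => A /proper_card AB; apply: IHm; apply: leq_trans AB _.
Qed.

Section CliquePolyRing.
Variables (R : comPzRingType) (n : nat) (E : rel 'I_n).
Hypotheses (Esym : symmetric E) (Eirr : irreflexive E).
Implicit Types (x : 'rV[R]_n) (S C : {set 'I_n}).

Lemma is_cliqueP C : reflect {in C &, forall u v, u != v -> E u v} (is_clique E C).
Proof.
apply: (iffP forall_inP) => [H u v uC vC | H u uC].
  exact: implyP (forall_inP (H u uC) v vC).
by apply/forall_inP => v vC; apply/implyP/H.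
Qed.

Lemma is_cliqueU1 w C : w \notin C ->
  is_clique E (w |: C) = is_clique E C && [forall v in C, E w v].
Proof.
move=> wC; apply/is_cliqueP/andP => [H | [/is_cliqueP HC /forall_inP Hw]].
  split; first by apply/is_cliqueP => u v uC vC; apply: H; rewrite in_setU1 ?uC ?vC orbT.
  apply/forall_inP => v vC; apply: H; rewrite ?in_setU1 ?eqxx ?vC ?orbT //.
  by apply: contraNneq wC => ->.
move=> u v; rewrite !in_setU1 => /predU1P[->|uC] /predU1P[->|vC]; rewrite ?eqxx // => uv.
- exact: Hw.
- by rewrite Esym; apply: Hw.
- exact: HC.
Qed.

Lemma cliquePoly_eq1 S x : {in S, forall v, x ord0 v = 0} -> cliquePoly E S x = 1.
Proof.
move=> x0; rewrite /cliquePoly (bigD1 finset.set0) /=; last first.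
  by rewrite finset.sub0set; apply/is_cliqueP => u; rewrite inE.
rewrite cards0 big_set0 expr0 mulr1 big1 ?addr0 // => C /andP[/andP[CS _] C0].
have [v vC] := set0Pn C C0.
by rewrite (bigD1 v) //= x0 ?mul0r ?mulr0 //; apply: (fintype.subsetP CS).
Qed.

Lemma cliquePoly_set0 x : cliquePoly E finset.set0 x = 1.
Proof. by apply: cliquePoly_eq1 => v; rewrite inE. Qed.

Lemma nbhd_subD1 S w : [set v in S | E w v] \subset S :\ w.
Proof.
apply/fintype.subsetP => v; rewrite !inE => /andP[vS Ewv]; rewrite vS andbT.
by apply: contraTneq Ewv => ->; rewrite Eirr.
Qed.

(* A clique of [S] either avoids [w], or is [w] added to a clique of the
   neighbourhood of [w] in [S]. *)
Lemma cliquePolyD1 S w x : w \in S ->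
  cliquePoly E S x =
  cliquePoly E (S :\ w) x - x ord0 w * cliquePoly E [set v in S | E w v] x.
Proof.
move=> wS; rewrite /cliquePoly (bigID (fun C => w \in C)) /= addrC; congr (_ + _).
  by apply: eq_bigl => C; rewrite subsetD1; case: (w \in C); rewrite ?andbF ?andbT.
rewrite (reindex_onto (fun C => w |: C) (fun C => C :\ w)) /=; last first.
  by move=> C /andP[_ wC]; rewrite finset.setD1K.
rewrite mulr_sumr -sumrN; apply: eq_big => C.
  rewrite setU11 andbT.
  have -> : ((w |: C) :\ w == C) = (w \notin C).
    by apply/eqP/idP => [<-|wC]; [rewrite setD11 | rewrite setU1K].
  have [wC|wC] /= := boolP (w \in C).
    rewrite andbF; apply/esym/negbTE/negP => /andP[/fintype.subsetP CN _].
    by have := CN w wC; rewrite inE Eirr andbF.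
  rewrite andbT is_cliqueU1 // finset.subUset finset.sub1set wS /=.
  apply/andP/andP => [[CS /andP[cC /forall_inP Hw]] | [/fintype.subsetP CN cC]].
    by split=> //; apply/fintype.subsetP => v vC; rewrite inE (fintype.subsetP CS) ?Hw.
  split; first by apply/fintype.subsetP => v /CN; rewrite inE => /andP[].
  by rewrite cC; apply/forall_inP => v /CN; rewrite inE => /andP[].
move=> /andP[_ /eqP CE]; have wC : w \notin C by rewrite -CE setD11.
by rewrite cardsU1 wC big_setU1 //= exprS mulN1r !mulNr mulrCA.
Qed.

Lemma cliquePoly_set1 v x : cliquePoly E [set v] x = 1 - x ord0 v.
Proof.
have Nv : [set u in [set v] | E v u] = finset.set0.
  by apply/setP => u; rewrite !inE; case: eqP => // ->; rewrite Eirr.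
by rewrite (cliquePolyD1 _ (set11 v)) finset.setDv Nv !cliquePoly_set0 mulr1.
Qed.

End CliquePolyRing.

Definition clique_pos (R : realDomainType) n (E : rel 'I_n) (x : 'rV[R]_n) :=
  forall S : {set 'I_n}, 0 < cliquePoly E S x.

Definition nonneg_orthant {R : numDomainType} {n} : set 'rV[R]_n :=
  [set x | forall v, 0 <= x ord0 v]%classic.

Lemma in_cube_nonneg (R : realDomainType) n (x : 'rV[R]_n) :
  in_cube x -> nonneg_orthant x.
Proof. by move=> x_cube v; case/andP: (x_cube v). Qed.

Section CliquePolyOrder.
Variables (R : realDomainType) (n : nat) (E : rel 'I_n).
Hypotheses (Esym : symmetric E) (Eirr : irreflexive E).
Implicit Types (x y : 'rV[R]_n) (S T A B : {set 'I_n}).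
Local Notation K := (cliquePoly E).

Lemma cliquePoly_antimono x S S' : nonneg_orthant x ->
  (forall T, 0 <= K T x) -> S \subset S' -> K S' x <= K S x.
Proof.
move=> x0 Kx0; elim/proper_ind: S' => S' IH SS'.
have [-> //|neq] := eqVneq S' S.
have /fintype.properP[_ [w wS' wS]] : S \proper S'.
  by rewrite finset.properEneq eq_sym neq SS'.
have SS'w : S \subset S' :\ w by rewrite subsetD1 SS' wS.
rewrite (cliquePolyD1 Esym Eirr _ wS'); apply: le_trans (IH _ (properD1 wS') SS'w).
by rewrite lerBlDr lerDl mulr_ge0.
Qed.

Lemma cliquePoly_ratioD1 x y B w : w \in B -> 0 <= y ord0 w <= x ord0 w ->
  let N := [set v in B | E w v] in
  0 <= K (B :\ w) x -> 0 <= K N y ->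
  K (B :\ w) x * K N y <= K (B :\ w) y * K N x ->
  K B x * K (B :\ w) y <= K B y * K (B :\ w) x.
Proof.
move=> wB /andP[yw0 ywx] N Bwx0 Ny0 ratio.
have ad0 := mulr_ge0 Bwx0 Ny0.
have := ler_wpM2r ad0 ywx; have := ler_wpM2l (le_trans yw0 ywx) ratio.
rewrite !(cliquePolyD1 Esym Eirr _ wB) -/N; nra.
Qed.

(* The second conjunct says that [K_A / K_B] is nondecreasing on the
   down-set of [x], for [A \subset B]. *)
Lemma cliquePoly_ratio x y : (forall v, 0 <= y ord0 v <= x ord0 v) ->
  forall B, (forall S, S \subset B -> 0 < K S x) ->
  0 < K B y /\ forall A, A \subset B -> K B x * K A y <= K B y * K A x.
Proof.
move=> yx; elim/proper_ind => B IH Bx.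
have IHB A : A \proper B ->
    0 < K A y /\ forall A', A' \subset A -> K A x * K A' y <= K A y * K A' x.
  by move=> AB; apply: IH => // S SA; apply/Bx/(fintype.subset_trans SA)/proper_sub.
have step w : w \in B -> K B x * K (B :\ w) y <= K B y * K (B :\ w) x.
  move=> wB; have Bw := properD1 wB; have NBw := nbhd_subD1 Eirr B w.
  apply: cliquePoly_ratioD1 => //.
  - exact: ltW (Bx _ (proper_sub Bw)).
  - exact: ltW (IHB _ (sub_proper_trans NBw Bw)).1.
  - exact: (IHB _ Bw).2.
have [-> | [w wB]] := set_0Vmem B.
  split=> [|A]; first by rewrite cliquePoly_set0.
  by rewrite finset.subset0 => /eqP ->; rewrite mulrC.
have Bwx := Bx _ (proper_sub (properD1 wB)).
have By : 0 < K B y.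
  have := step w wB; have := Bx B (subxx B); have := (IHB _ (properD1 wB)).1; nra.
split=> // A AB; have [-> | AnB] := eqVneq A B; first by rewrite mulrC.
have /fintype.properP[_ [v vB vA]] : A \proper B by rewrite finset.properEneq AnB AB.
have ABv : A \subset B :\ v by rewrite subsetD1 AB vA.
have := (IHB _ (properD1 vB)).2 A ABv; have := step v vB.
have := Bx _ (proper_sub (properD1 vB)); have := Bx A AB; have := Bx B (subxx B).
nra.
Qed.

Lemma clique_pos_downward x y : clique_pos E x ->
  (forall v, 0 <= y ord0 v <= x ord0 v) -> clique_pos E y.
Proof.
by move=> px yx S; have [] := cliquePoly_ratio yx (fun T (_ : T \subset S) => px T).
Qed.

Lemma clique_pos_lt1 x v : clique_pos E x -> x ord0 v < 1.
Proof. by move/(_ [set v]); rewrite (cliquePoly_set1 Esym Eirr) subr_gt0. Qed.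

Lemma cliquePoly_lt0_past_zero x y S :
  (forall v, 0 <= x ord0 v <= y ord0 v) ->
  (forall v, 0 < x ord0 v -> x ord0 v < y ord0 v) ->
  K S x = 0 -> (forall T, T \proper S -> 0 < K T x /\ 0 < K T y) -> K S y < 0.
Proof.
move=> xy xy_lt KS0 Hpos.
have [S0 | [w wS]] := set_0Vmem S.
  by move: KS0; rewrite S0 cliquePoly_set0 => /eqP; rewrite oner_eq0.
have Sw := properD1 wS; have NSw := nbhd_subD1 Eirr S w.
set N := [set v in S | E w v] in NSw *.
have [Swx Swy] := Hpos _ Sw; have [Nx Ny] := Hpos _ (sub_proper_trans NSw Sw).
have [_ ratio] := cliquePoly_ratio xy (fun T TSw => (Hpos T (sub_proper_trans TSw Sw)).2).
have {}ratio := ratio _ NSw.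
move: KS0; rewrite !(cliquePolyD1 Esym Eirr _ wS) -/N => /eqP; rewrite subr_eq0 => /eqP KSw.
have xw : 0 < x ord0 w by move: Swx; rewrite KSw pmulr_lgt0.
have {}ratio : K (S :\ w) y <= x ord0 w * K N y.
  by rewrite -(ler_pM2r Nx) mulrAC -KSw.
have := xy_lt w xw; nra.
Qed.

End CliquePolyOrder.

Section NearPoints.
Variable R : numFieldType.
Implicit Types (P : R -> Prop) (a b : R).
Local Open Scope classical_set_scope.

Lemma near_left_exists P a b :
  a < b -> (\forall r \near b, P r) -> exists r, [/\ a < r, r < b & P r].
Proof.
move=> ab Pb; apply: (@filter_ex _ b^'-); near=> r; split; near: r.
- exact: nbhs_left_gt.
- exact: nbhs_left_lt.
- exact: cvg_within _ Pb.
Unshelve. all: by end_near.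
Qed.

Lemma near_right_exists P a b :
  a < b -> (\forall r \near a, P r) -> exists r, [/\ a < r, r < b & P r].
Proof.
move=> ab Pa; apply: (@filter_ex _ a^'+); near=> r; split; near: r.
- exact: nbhs_right_gt.
- exact: nbhs_right_lt.
- exact: cvg_within _ Pa.
Unshelve. all: by end_near.
Qed.

End NearPoints.

Section SubspaceContinuity.
Local Open Scope classical_set_scope.

Lemma continuous_subspace_cvg (T U : topologicalType) (A : set T) (f : T -> U) :
  (forall x, A x -> f t @[t --> within A (nbhs x)] --> f x) ->
  {within A, continuous f}.
Proof.
move=> Af; rewrite continuous_subspace_in => x /[1!inE] Ax.
by have := Af x Ax; rewrite (nbhs_subspace_in Ax).
Qed.

(* No continuity of [phi] is needed at [0]: the bound makes [phi t *: t]
   vanish there. *)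
Lemma continuous_within_scale (R : realFieldType) (V : normedModType R)
    (A : set V) (phi : V -> R) (M : R) :
  (forall t, A t -> t != 0 -> `|phi t| <= M) ->
  (forall y, A y -> y != 0 -> phi t @[t --> within A (nbhs y)] --> phi y) ->
  {within A, continuous (fun t => phi t *: t)}.
Proof.
move=> phi_le phi_cvg; apply: continuous_subspace_cvg => y Ay.
have [-> | y_neq0] := eqVneq y 0; last exact: cvgZ (phi_cvg y Ay y_neq0) (cvg_within _).
rewrite scaler0; apply/cvgrPdist_lt => e e0; rewrite near_withinE.
have d0 : 0 < e / (`|M| + 1) by rewrite divr_gt0 // ltr_wpDl.
have /cvgrPdist_lt/(_ _ d0) := @cvg_id _ (nbhs (0 : V)).
apply: filterS => t.
rewrite !sub0r !normrN => t_lt At; have [-> | t_neq0] := eqVneq t 0.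
  by rewrite scaler0 normr0.
have phi_t := le_trans (phi_le t At t_neq0) (ler_norm M).
by move: t_lt (normr_ge0 t); rewrite normrZ ltr_pdivlMr ?ltr_wpDl //; nra.
Qed.

End SubspaceContinuity.

Section EuclideanNorm.
Variables (R : rcfType) (n : nat).
Implicit Types (x : 'rV[R]_n) (c : R).

Lemma enorm_ge0 x : 0 <= enorm x.
Proof. exact: sqrtr_ge0. Qed.

Lemma enorm0 : enorm (0 : 'rV[R]_n) = 0.
Proof. by rewrite /enorm big1 ?sqrtr0 // => i _; rewrite mxE expr0n. Qed.

Lemma sqr_coord_le x i : x ord0 i ^+ 2 <= \sum_(j < n) x ord0 j ^+ 2.
Proof. by rewrite (bigD1 i) //= lerDl sumr_ge0 // => j _; apply: sqr_ge0. Qed.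

Lemma coord_le_enorm x i : x ord0 i <= enorm x.
Proof.
by rewrite (le_trans (ler_norm _)) // -sqrtr_sqr ler_wsqrtr // sqr_coord_le.
Qed.

Lemma enorm_gt0 x : x != 0 -> 0 < enorm x.
Proof.
move=> /rV0Pn[i xi].
by rewrite sqrtr_gt0 (lt_le_trans _ (sqr_coord_le x i)) // exprn_even_gt0.
Qed.

Lemma enormZ c x : 0 <= c -> enorm (c *: x) = c * enorm x.
Proof.
move=> c0; rewrite /enorm -[c in RHS](ger0_norm c0) -sqrtr_sqr -sqrtrM ?sqr_ge0 //.
by rewrite mulr_sumr; congr Num.sqrt; apply: eq_bigr => i _; rewrite mxE exprMn.
Qed.

Definition normalize x := (enorm x)^-1 *: x.

Lemma enormZnormalize x : enorm x *: normalize x = x.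
Proof.
have [->|x_neq0] := eqVneq x 0; first by rewrite enorm0 scale0r.
by rewrite scalerA mulfV ?scale1r // gt_eqF // enorm_gt0.
Qed.

Lemma enorm_normalize x : x != 0 -> enorm (normalize x) = 1.
Proof.
move=> x_neq0; have x0 := enorm_gt0 x_neq0.
by rewrite enormZ ?invr_ge0 ?(ltW x0) // mulVf // gt_eqF.
Qed.

Lemma normalizeZ c x : 0 < c -> normalize (c *: x) = normalize x.
Proof.
move=> c0; rewrite /normalize enormZ ?(ltW c0) // scalerA invfM mulrAC.
by rewrite mulVf ?gt_eqF // mul1r.
Qed.

Lemma normalize_ge0 x : nonneg_orthant x -> nonneg_orthant (normalize x).
Proof. by move=> x0 v; rewrite mxE mulr_ge0 ?invr_ge0 ?enorm_ge0. Qed.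

Lemma normalize_unit x :
  nonneg_orthant x -> x != 0 -> unit_nonneg (normalize x).
Proof. by move=> x0 x_neq0; split; [exact: normalize_ge0 | exact: enorm_normalize]. Qed.

Lemma unit_nonneg_neq0 x : unit_nonneg x -> x != 0.
Proof. by case=> _ x1; apply: contra_eq_neq x1 => ->; rewrite enorm0 eq_sym oner_neq0. Qed.

End EuclideanNorm.

Section NormalizeContinuity.
Variables (R : realType) (n : nat).

Lemma enorm_continuous : continuous (@enorm R n).
Proof.
move=> x; pose sum_sqr (y : 'rV[R]_n) := \sum_(i < n) y ord0 i ^+ 2.
apply: (@continuous_comp _ _ _ sum_sqr Num.sqrt).
  apply: (continuous_big add_continuous) => i _ y.
  apply: (@continuous_comp _ _ _ (fun y : 'rV[R]_n => y ord0 i) (fun t : R => t ^+ 2)).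
    exact: coord_continuous.
  exact: exprn_continuous.
exact: sqrt_continuous.
Qed.

Lemma normalize_continuous x : x != 0 -> {for x, continuous (@normalize R n)}.
Proof.
move=> x_neq0; apply: cvgZ _ cvg_id; apply: cvgV; first by rewrite gt_eqF ?enorm_gt0.
exact: enorm_continuous.
Qed.

End NormalizeContinuity.

Section CliquePolyContinuity.
Variables (R : realType) (n : nat) (E : rel 'I_n).
Local Notation K := (@cliquePoly R n E).
Local Open Scope classical_set_scope.

Lemma cliquePoly_continuous S : continuous (K S).
Proof.
apply: (continuous_big add_continuous) => C _.
have prod_cont : continuous (fun x : 'rV[R]_n => \prod_(v in C) x ord0 v).
  by apply: (continuous_big mul_continuous) => v _; apply: coord_continuous.
by move=> x; apply: cvgM (cvg_cst _) (prod_cont x).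
Qed.

Variables (T : topologicalType) (f : T -> 'rV[R]_n) (t : T).
Hypothesis f_cont : {for t, continuous f}.

Let cliquePoly_comp_cvg S : K S (f t') @[t' --> t] --> K S (f t).
Proof. exact: continuous_comp f_cont (@cliquePoly_continuous S (f t)). Qed.

Lemma cliquePoly_gt0_near (P : pred {set 'I_n}) :
  (forall S, P S -> 0 < K S (f t)) -> \forall t' \near t, forall S, P S -> 0 < K S (f t').
Proof.
move=> Kgt0; apply: filter_forall => S; have [PS|_] := boolP (P S); last exact: nearW.
by apply: filterS (cvgr_gt _ (@cliquePoly_comp_cvg S) _ (Kgt0 S PS)) => t' + _.
Qed.

Lemma clique_pos_near : clique_pos E (f t) -> \forall t' \near t, clique_pos E (f t').
Proof.
move=> pt; apply: filterS (@cliquePoly_gt0_near predT (fun S _ => pt S)) => t' pt' S.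
exact: pt'.
Qed.

Lemma cliquePoly_lt0_near S : K S (f t) < 0 -> \forall t' \near t, K S (f t') < 0.
Proof. by move=> Klt0; apply: cvgr_lt (@cliquePoly_comp_cvg S) _ Klt0. Qed.

End CliquePolyContinuity.

Section Ray.
Variables (R : realType) (n : nat) (E : rel 'I_n).
Hypotheses (Esym : symmetric E) (Eirr : irreflexive E).
Variable u : 'rV[R]_n.
Hypotheses (u_ge0 : nonneg_orthant u) (u_neq0 : u != 0).
Implicit Types (S T : {set 'I_n}).
Local Notation K := (@cliquePoly R n E).
Local Open Scope classical_set_scope.

Lemma clique_pos_ray_downward r s :
  clique_pos E (r *: u) -> 0 <= s <= r -> clique_pos E (s *: u).
Proof.
move=> pr /andP[s0 sr]; apply: (clique_pos_downward Esym Eirr pr) => v.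
by rewrite !mxE mulr_ge0 // ler_wpM2r.
Qed.

Let exits := [set r : R | 0 <= r /\ ~ clique_pos E (r *: u)].
Let exit_time := inf exits.

Let exits_neq0 : exits !=set0.
Proof.
have /rV0Pn[v uv] := u_neq0.
exists (u ord0 v)^-1; split; first by rewrite invr_ge0.
by move/(_ [set v]%SET); rewrite (cliquePoly_set1 Esym Eirr) mxE mulVf // subrr ltxx.
Qed.

Let exits_lbound : has_lbound exits.
Proof. by exists 0 => r []. Qed.

Let clique_pos_lt_exit r : 0 <= r -> clique_pos E (r *: u) -> r < exit_time.
Proof.
move=> r0 pr; have ray_cont := @scalel_continuous R 'rV[R]_n u r.
have r_lt : r < r + 1 by rewrite ltrDl.
have [r' [rr' _ pr']] := near_right_exists r_lt (clique_pos_near ray_cont pr).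
apply: lt_le_trans rr' _; apply: (lb_le_inf exits_neq0) => z [z0 nz].
rewrite leNgt; apply/negP => ltz.
by apply/nz/(clique_pos_ray_downward pr'); rewrite z0 ltW.
Qed.

Let lt_exit_clique_pos r : 0 <= r -> r < exit_time -> clique_pos E (r *: u).
Proof.
move=> r0 rlt; apply: contrapT => nr.
by move: rlt; rewrite ltNge ge_inf.
Qed.

Let exit_time_gt0 : 0 < exit_time.
Proof.
apply: clique_pos_lt_exit => // S.
by rewrite scale0r cliquePoly_eq1 // => v _; rewrite mxE.
Qed.

Let cliquePoly_exit_ge0 S : 0 <= K S (exit_time *: u).
Proof.
rewrite leNgt; apply/negP => Klt0.
have ray_cont := @scalel_continuous R 'rV[R]_n u exit_time.
have [r [r0 rlt Kr]] :=
  near_left_exists exit_time_gt0 (cliquePoly_lt0_near ray_cont Klt0).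
by move: (lt_exit_clique_pos (ltW r0) rlt S); rewrite ltNge ltW.
Qed.

Let rho_exit : rho E u = exit_time.
Proof.
have exit_npos : ~ clique_pos E (exit_time *: u).
  by move/(clique_pos_lt_exit (ltW exit_time_gt0)); rewrite ltxx.
have [S /negP] := (existsNP _).2 exit_npos.
rewrite -leNgt => KS_le0.
have KS0 : K S (exit_time *: u) = 0 by apply/eqP; rewrite eq_le KS_le0 cliquePoly_exit_ge0.
have exit_min : [set r | 0 <= r /\ min_cliquePoly_eq0 E (r *: u)] exit_time.
  by split; [exact: ltW | split; [exact: cliquePoly_exit_ge0 | exists S]].
apply/le_anti/andP; split; first by apply: ge_inf exit_min; exists 0 => r [].
apply: lb_le_inf; first by exists exit_time.
move=> r [r0 [_ [T KT0]]]; rewrite leNgt; apply/negP => rlt.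
by move: (lt_exit_clique_pos r0 rlt T); rewrite KT0 ltxx.
Qed.

Lemma clique_pos_rayP r : 0 <= r -> clique_pos E (r *: u) <-> r < rho E u.
Proof.
move=> r0; rewrite rho_exit.
by split; [exact: clique_pos_lt_exit | exact: lt_exit_clique_pos].
Qed.

Lemma rho_gt0 : 0 < rho E u.
Proof. by rewrite rho_exit. Qed.

Lemma cliquePoly_rho_ge0 S : 0 <= K S (rho E u *: u).
Proof. by rewrite rho_exit. Qed.

Lemma cliquePoly_rho_min_zero :
  exists S, K S (rho E u *: u) = 0 /\ forall T, T \proper S -> 0 < K T (rho E u *: u).
Proof.
have /ex_minset[S /minsetP[/eqP KS0 Smin]] : exists S, K S (rho E u *: u) == 0.
  have /(existsNP _).2[S /negP] : ~ clique_pos E (rho E u *: u).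
    by move/(clique_pos_rayP (ltW rho_gt0)); rewrite ltxx.
  by rewrite -leNgt => KS_le0; exists S; rewrite eq_le KS_le0 cliquePoly_rho_ge0.
exists S; split=> // T /andP[TS STn]; rewrite lt_def cliquePoly_rho_ge0 andbT.
by apply: contra STn => /eqP KT0; rewrite (Smin T) ?KT0.
Qed.

Lemma cliquePolyT_rho : K [set: 'I_n]%SET (rho E u *: u) = 0.
Proof.
have [S [KS0 _]] := cliquePoly_rho_min_zero.
apply/eqP; rewrite eq_le cliquePoly_rho_ge0 andbT -KS0.
apply: (cliquePoly_antimono Esym Eirr) => [v||]; last exact: finset.subsetT.
  by rewrite mxE mulr_ge0 ?(ltW rho_gt0).
exact: cliquePoly_rho_ge0.
Qed.

Lemma rho_le_root r : 0 <= r -> K [set: 'I_n]%SET (r *: u) = 0 -> rho E u <= r.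
Proof.
move=> r0 Kr0; rewrite leNgt; apply/negP => /(clique_pos_rayP r0)/(_ [set: 'I_n]%SET).
by rewrite Kr0 ltxx.
Qed.

End Ray.

Section RhoContinuity.
Variables (R : realType) (n : nat) (E : rel 'I_n).
Hypotheses (Esym : symmetric E) (Eirr : irreflexive E).
Variable u : 'rV[R]_n.
Hypotheses (u_ge0 : nonneg_orthant u) (u_neq0 : u != 0).
Local Notation K := (@cliquePoly R n E).

Let rho_lower_near e : 0 < e ->
  \forall u' \near u, nonneg_orthant u' -> u' != 0 -> rho E u - e < rho E u'.
Proof.
move=> e_gt0; have rho0 := rho_gt0 Esym Eirr u_ge0 u_neq0.
have lt_rho : rho E u - e < rho E u by lra.
have [s [s_gt s_lt s_gt0]] := near_left_exists lt_rho (lt_nbhsr rho0).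
have ps : clique_pos E (s *: u).
  exact/(clique_pos_rayP Esym Eirr u_ge0 u_neq0 (ltW s_gt0)).
have := clique_pos_near (@scaler_continuous _ _ s u) ps.
apply: filterS => u' ps' u'_ge0 u'_neq0.
suff : s < rho E u' by lra.
exact/(clique_pos_rayP Esym Eirr u'_ge0 u'_neq0 (ltW s_gt0)).
Qed.

Let rho_upper_near e : 0 < e ->
  \forall u' \near u, nonneg_orthant u' -> u' != 0 -> rho E u' < rho E u + e.
Proof.
move=> e_gt0; have rho0 := rho_gt0 Esym Eirr u_ge0 u_neq0.
have [S [KS0 Smin]] := cliquePoly_rho_min_zero Esym Eirr u_ge0 u_neq0.
have lt_rho : rho E u < rho E u + e by lra.
have [r [r_gt r_lt Kr]] := near_right_exists lt_rho
  (cliquePoly_gt0_near (@scalel_continuous _ _ u (rho E u))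
     (P := fun T => T \proper S) Smin).
have KSr : K S (r *: u) < 0.
  apply: (cliquePoly_lt0_past_zero Esym Eirr _ _ KS0) => [v | v | T TS].
  - by rewrite !mxE mulr_ge0 ?ler_wpM2r // ltW.
  - by rewrite !mxE pmulr_rgt0 // => uv; rewrite ltr_pM2r.
  - by split; [apply: Smin | apply: Kr].
have := cliquePoly_lt0_near (@scaler_continuous _ _ r u) KSr.
apply: filterS => u' KSr' u'_ge0 u'_neq0.
suff : rho E u' <= r by lra.
have r_ge0 : 0 <= r by lra.
rewrite leNgt; apply/negP => /(clique_pos_rayP Esym Eirr u'_ge0 u'_neq0 r_ge0)/(_ S).
by rewrite ltNge ltW.
Qed.

Lemma rho_near e : 0 < e ->
  \forall u' \near u, nonneg_orthant u' -> `|rho E u - rho E u'| < e.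
Proof.
move=> e_gt0.
apply: filterS3 (rho_lower_near e_gt0) (rho_upper_near e_gt0) (cvgr_neq0 _ cvg_id u_neq0).
by move=> u' lower upper u'_neq0 u'_ge0; rewrite ltr_distlC lower ?upper.
Qed.

End RhoContinuity.

Section RhoOnSphere.
Variables (R : realType) (n : nat) (E : rel 'I_n).
Hypotheses (Esym : symmetric E) (Eirr : irreflexive E).
Implicit Types (u x y : 'rV[R]_n).
Local Open Scope classical_set_scope.

Lemma rho_normalize_gt0 x :
  nonneg_orthant x -> x != 0 -> 0 < rho E (normalize x).
Proof.
move=> x0 x_neq0; have nx := normalize_unit x0 x_neq0; have [nx0 _] := nx.
exact (rho_gt0 Esym Eirr nx0 (unit_nonneg_neq0 nx)).
Qed.

Lemma rho_unit_le_sqrt u : unit_nonneg u -> rho E u <= Num.sqrt n%:R.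
Proof.
move=> Hu; have [u0 u1] := Hu; have u_neq0 := unit_nonneg_neq0 Hu.
have rho0 := rho_gt0 Esym Eirr u0 u_neq0.
have coord_le1 i : rho E u * u ord0 i <= 1.
  have := cliquePoly_rho_ge0 Esym Eirr u0 u_neq0 [set i]%SET.
  by rewrite (cliquePoly_set1 Esym Eirr) mxE subr_ge0.
have sum1 : \sum_(i < n) u ord0 i ^+ 2 = 1.
  rewrite -[LHS]sqr_sqrtr ?sumr_ge0 // => [|i _]; last exact: sqr_ge0.
  by rewrite [Num.sqrt _]u1 expr1n.
rewrite -(ger0_norm (ltW rho0)) -sqrtr_sqr; apply: ler_wsqrtr.
have -> : rho E u ^+ 2 = \sum_(i < n) (rho E u * u ord0 i) ^+ 2.
  by rewrite -[LHS]mulr1 -sum1 mulr_sumr; apply: eq_bigr => i _; rewrite exprMn.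
apply: (@le_trans _ _ (\sum_(i < n) (1 : R))); last by rewrite sumr_const card_ord.
by apply: ler_sum => i _; rewrite expr_le1 ?coord_le1 ?mulr_ge0 ?(ltW rho0).
Qed.

Lemma rho_unit_lbound : exists2 d, 0 < d & forall u, unit_nonneg u -> d <= rho E u.
Proof.
pose one := const_mx 1 : 'rV[R]_n.
have p0 : clique_pos E (0 *: one).
  by move=> S; rewrite scale0r cliquePoly_eq1 // => v _; rewrite mxE.
have [d [d0 _ pd]] :=
  near_right_exists ltr01 (clique_pos_near (@scalel_continuous _ _ one 0) p0).
exists d => // u Hu; have [u0 u1] := Hu.
apply/ltW/(clique_pos_rayP Esym Eirr u0 (unit_nonneg_neq0 Hu) (ltW d0)).
apply: (clique_pos_downward Esym Eirr pd) => v.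
by rewrite !mxE mulr_ge0 ?(ltW d0) //= ler_wpM2l ?(ltW d0) // -u1 coord_le_enorm.
Qed.

Lemma rho_unit_continuous : {within @unit_nonneg R n, continuous (rho E)}.
Proof.
apply: continuous_subspace_cvg => u Hu; apply/cvgrPdist_lt => e e0; rewrite near_withinE.
have [u0 _] := Hu; apply: filterS (rho_near Esym Eirr u0 (unit_nonneg_neq0 Hu) e0).
by move=> u' H [u'0 _]; apply: H.
Qed.

Lemma rho_normalize_cvg (A : set 'rV[R]_n) y : A `<=` nonneg_orthant -> A y -> y != 0 ->
  rho E (normalize t) @[t --> within A (nbhs y)] --> rho E (normalize y).
Proof.
move=> A0 Ay y_neq0; apply/cvgrPdist_lt => e e0; rewrite near_withinE.
have ny := normalize_unit (A0 y Ay) y_neq0; have [ny0 _] := ny.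
have : \forall t \near y, nonneg_orthant (normalize t) ->
    `|rho E (normalize y) - rho E (normalize t)| < e.
  exact (normalize_continuous y_neq0 (rho_near Esym Eirr ny0 (unit_nonneg_neq0 ny) e0)).
by apply: filterS => t H At; apply/H/normalize_ge0; apply: A0.
Qed.

Lemma RG_iff_enorm_lt_rho x :
  in_cube x -> x != 0 -> RG E x <-> enorm x < rho E (normalize x).
Proof.
move=> x_cube x_neq0; have x0 := in_cube_nonneg x_cube.
have nx := normalize_unit x0 x_neq0; have [nx0 _] := nx.
have := clique_pos_rayP Esym Eirr nx0 (unit_nonneg_neq0 nx) (enorm_ge0 x).
rewrite enormZnormalize => <-.
by split=> [[]|].
Qed.

End RhoOnSphere.

Section Homeomorphism.
Variables (R : realType) (n : nat) (E : rel 'I_n).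
Hypotheses (Esym : symmetric E) (Eirr : irreflexive E).
Implicit Types (x y : 'rV[R]_n).
Local Open Scope classical_set_scope.

(* At [x = 0] the factor is a junk value, but it only scales [0]. *)
Definition rho_map_inv x := (rho E (normalize x))^-1 *: x.

Lemma rho_mapE y : rho_map E y = rho E (normalize y) *: y.
Proof. by rewrite /rho_map; case: eqP => [->|_]; rewrite ?scaler0. Qed.

Lemma RG0 : RG E (0 : 'rV[R]_n).
Proof.
split=> [v | S]; first by rewrite mxE lexx ler01.
by rewrite cliquePoly_eq1 // => v _; rewrite mxE.
Qed.

Lemma rho_map_RG y : open_ball_cube y -> RG E (rho_map E y).
Proof.
move=> [y_cube y_lt1]; have y0 := in_cube_nonneg y_cube.
have [-> | y_neq0] := eqVneq y 0; first by rewrite rho_mapE scaler0; apply: RG0.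
have ny := normalize_unit y0 y_neq0; have [ny0 _] := ny.
have rho0 := rho_normalize_gt0 Esym Eirr y0 y_neq0.
have pos : clique_pos E (rho_map E y).
  rewrite rho_mapE -{2}(enormZnormalize y) scalerA.
  apply/(clique_pos_rayP Esym Eirr ny0 (unit_nonneg_neq0 ny)).
    by rewrite mulr_ge0 ?enorm_ge0 ?(ltW rho0).
  by rewrite gtr_pMr.
split=> // v; rewrite (ltW (clique_pos_lt1 Esym Eirr v pos)) andbT.
by rewrite rho_mapE mxE mulr_ge0 ?y0 ?(ltW rho0).
Qed.

Lemma rho_map_inv_ball x : RG E x -> open_ball_cube (rho_map_inv x).
Proof.
move=> Rx; have [x_cube _] := Rx; have x0 := in_cube_nonneg x_cube.
have [-> | x_neq0] := eqVneq x 0.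
  by rewrite /rho_map_inv scaler0; split=> [v|]; rewrite ?enorm0 ?mxE ?lexx ?ler01 ?ltr01.
have rho0 := rho_normalize_gt0 Esym Eirr x0 x_neq0.
have lt_rho := (RG_iff_enorm_lt_rho Esym Eirr x_cube x_neq0).1 Rx.
have lt1 : enorm (rho_map_inv x) < 1.
  by rewrite enormZ ?invr_ge0 ?(ltW rho0) // mulrC ltr_pdivrMr // mul1r.
split=> // v; have := coord_le_enorm (rho_map_inv x) v.
rewrite !mxE => /le_trans/(_ (ltW lt1)) ->.
by rewrite andbT mulr_ge0 ?x0 ?invr_ge0 ?(ltW rho0).
Qed.

Lemma rho_mapK y : nonneg_orthant y -> rho_map_inv (rho_map E y) = y.
Proof.
move=> y0; have [-> | y_neq0] := eqVneq y 0.
  by rewrite rho_mapE /rho_map_inv !scaler0.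
have rho0 := rho_normalize_gt0 Esym Eirr y0 y_neq0.
by rewrite /rho_map_inv rho_mapE normalizeZ // scalerA mulVf ?gt_eqF // scale1r.
Qed.

Lemma rho_map_invK x : nonneg_orthant x -> rho_map E (rho_map_inv x) = x.
Proof.
move=> x0; have [-> | x_neq0] := eqVneq x 0.
  by rewrite rho_mapE /rho_map_inv !scaler0.
have rho0 := rho_normalize_gt0 Esym Eirr x0 x_neq0.
by rewrite rho_mapE /rho_map_inv normalizeZ ?invr_gt0 // scalerA mulfV ?gt_eqF // scale1r.
Qed.

Lemma rho_map_continuous : {within nonneg_orthant, continuous (@rho_map R n E)}.
Proof.
have -> : @rho_map R n E = fun y => rho E (normalize y) *: y.
  by apply/funext => y; rewrite rho_mapE.
apply: (@continuous_within_scale _ _ _ _ (Num.sqrt n%:R)) => [t t0 t_neq0 | y y0 y_neq0].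
  have rho0 := rho_normalize_gt0 Esym Eirr t0 t_neq0.
  rewrite ger0_norm ?(ltW rho0) //.
  exact (rho_unit_le_sqrt Esym Eirr (normalize_unit t0 t_neq0)).
exact: rho_normalize_cvg.
Qed.

Lemma rho_map_inv_continuous : {within nonneg_orthant, continuous rho_map_inv}.
Proof.
have [d d0 d_le] := rho_unit_lbound R Esym Eirr.
apply: (@continuous_within_scale _ _ _ _ d^-1) => [t t0 t_neq0 | y y0 y_neq0].
  have rho0 := rho_normalize_gt0 Esym Eirr t0 t_neq0.
  rewrite ger0_norm ?invr_ge0 ?(ltW rho0) // lef_pV2 ?posrE //.
  exact (d_le _ (normalize_unit t0 t_neq0)).
apply: cvgV; first by rewrite gt_eqF ?rho_normalize_gt0.
exact: rho_normalize_cvg.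
Qed.

End Homeomorphism.

Unset Implicit Arguments.
Local Open Scope classical_set_scope.

Theorem lemma4p3 (R : realType) (n : nat) (E : rel 'I_n)
  (Esym : symmetric E) (Eirr : irreflexive E) :
  (* (1) *)
  (forall u : 'rV[R]_n, @unit_nonneg R n u ->
     exists r0 : R,
       [/\ 0 <= r0, cliquePoly E [set: 'I_n]%SET (r0 *: u) = 0,
           (forall r : R, 0 <= r -> cliquePoly E [set: 'I_n]%SET (r *: u) = 0 -> r0 <= r)
         & rho E u = r0]) /\
  (* (2) *)
  (forall x : 'rV[R]_n, in_cube x -> x != 0 ->
     (RG E x <-> enorm x < rho E ((enorm x)^-1 *: x))) /\
  (* (3) *)
  {within @unit_nonneg R n, continuous (rho E)} /\
  (* (4) *)
  (exists g : 'rV[R]_n -> 'rV[R]_n,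
     [/\ (forall y, @open_ball_cube R n y -> RG E (rho_map E y)),
         (forall x, RG E x -> @open_ball_cube R n (g x)),
         (forall y, @open_ball_cube R n y -> g (rho_map E y) = y),
         (forall x, RG E x -> rho_map E (g x) = x) &
       {within @open_ball_cube R n, continuous (rho_map E)} /\
       {within RG E, continuous g}]).
Proof.
have ball_orthant : @open_ball_cube R n `<=` nonneg_orthant.
  by move=> y [y_cube _]; apply: in_cube_nonneg.
have RG_orthant : @RG R n E `<=` nonneg_orthant.
  by move=> x [x_cube _]; apply: in_cube_nonneg.
split.
  move=> u Hu; have [u0 _] := Hu; have u_neq0 := unit_nonneg_neq0 Hu.
  exists (rho E u); split=> //; first exact/ltW/(rho_gt0 Esym Eirr u0 u_neq0).
    exact: cliquePolyT_rho.
  by move=> r; apply: rho_le_root.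
split; first exact: RG_iff_enorm_lt_rho.
split; first exact: rho_unit_continuous.
exists (rho_map_inv E); split.
- exact: rho_map_RG.
- exact: rho_map_inv_ball.
- by move=> y /ball_orthant; apply: rho_mapK.
- by move=> x /RG_orthant; apply: rho_map_invK.
- split; apply: continuous_subspaceW.
  + exact: ball_orthant.
  + exact: rho_map_continuous.
  + exact: RG_orthant.
  + exact: rho_map_inv_continuous.
Qed.
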